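(* Let $n\ge 1$ and let $U,V$ be $2^n\times 2^n$ unitary matrices that are functionally distinct, i.e. there is no $\theta\in\mathbb{R}$ with $V=e^{i\theta}U$. Then there exists at least one local quantum stimulus $\ket{l}=\ket{l_{n-1}}\otimes\cdots\otimes\ket{l_0}$, with each $\ket{l_j}\in\{\ket{0},\ket{1},\ket{+},\ket{-},\ket{\uparrow},\ket{\downarrow}\}$, such that $\mathcal{F}(U\ket{l},V\ket{l})\neq 1$.
   Context: Single-qubit states: $\ket{0},\ket{1}$ are the computational basis vectors of $\mathbb{C}^2$, $\ket{\pm}=\tfrac{1}{\sqrt2}(\ket{0}\pm\ket{1})$, $\ket{\uparrow}=\tfrac{1}{\sqrt2}(\ket{0}+i\ket{1})$, $\ket{\downarrow}=\tfrac{1}{\sqrt2}(\ket{0}-i\ket{1})$. The $6^n$ tensor products $\ket{l_{n-1}}\otimes\cdots\otimes\ket{l_0}$ of such states are the local quantum stimuli in $(\mathbb{C}^2)^{\otimes n}\cong\mathbb{C}^{2^n}$. For unit vectors $\ket{\psi},\ket{\phi}$, the fidelity is $\mathcal{F}(\ket{\psi},\ket{\phi})=|\langle\psi|\phi\rangle|^2\in[0,1]$. *)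

From HB Require Import structures.
From mathcomp Require Import all_boot all_order all_algebra.
From mathcomp Require Import complex.
From mathcomp Require Import reals trigo.
Set Implicit Arguments. Unset Strict Implicit. Unset Printing Implicit Defensive.
Import Order.TTheory GRing.Theory Num.Theory.
Local Open Scope ring_scope.
Local Open Scope complex_scope.

Inductive qstate := Q0 | Q1 | Qplus | Qminus | Qup | Qdown.

Section Defs.
Variable R : realType.
Local Notation C := R[i].

Definition isqrt2 : C := ((Num.sqrt (2 : R))^-1)%:C.
Definition imag_i : C := 0 +i* 1.

(* amplitude <b|l> of single-qubit state l on basis vector |b>, b = false ~ |0>, true ~ |1> *)
Definition amp (l : qstate) (b : bool) : C :=
  match l, b with
  | Q0, false => 1 | Q0, true => 0
  | Q1, false => 0 | Q1, true => 1
  | Qplus, _ => isqrt2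
  | Qminus, false => isqrt2 | Qminus, true => - isqrt2
  | Qup, false => isqrt2 | Qup, true => imag_i * isqrt2
  | Qdown, false => isqrt2 | Qdown, true => - (imag_i * isqrt2)
  end.

(* |l_{n-1}> ⊗ ... ⊗ |l_0> : basis index k = sum_j b_j 2^j, qubit j carries bit j *)
Definition stimulus (n : nat) (l : 'I_n -> qstate) : 'cV[C]_(2 ^ n) :=
  \col_(k < 2 ^ n) \prod_(j < n) amp (l j) (odd (k %/ 2 ^ j)).

Definition inner (m : nat) (psi phi : 'cV[C]_m) : C :=
  \sum_(k < m) (psi k 0)^* * phi k 0.

Definition fidelity (m : nat) (psi phi : 'cV[C]_m) : C := `|inner psi phi| ^+ 2.

Definition adjoint (m : nat) (A : 'M[C]_m) : 'M[C]_m := (map_mx Num.conj A)^T.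

Definition unitary (m : nat) (A : 'M[C]_m) : Prop := adjoint A *m A = 1%:M.

Definition expi (t : R) : C := cos t +i* sin t.

End Defs.
Arguments stimulus {R n} l.
Arguments expi {R} t.

From HB Require Import structures.
From mathcomp Require Import all_boot all_order all_algebra.
From mathcomp Require Import complex.
From mathcomp Require Import reals trigo.
From mathcomp Require Import ring lra.
From Stdlib Require Import Classical_Pred_Type.
Set Implicit Arguments. Unset Strict Implicit. Unset Printing Implicit Defensive.
Import Order.TTheory GRing.Theory Num.Theory.
Local Open Scope ring_scope.
Local Open Scope complex_scope.

(* Put W := U^† V, again a unitary matrix, so that
   <U x, V x> = x^† W x and V = U W.  We only use two kinds of local stimuli:
   - the computational basis states |k> (every qubit in |0> or |1>), for which
     x^† W x = W_kk; fidelity 1 forces |W_kk| = 1, and since every column of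
     the unitary W has norm 1, all off-diagonal entries of W vanish;
   - the state |+>^n = 2^(-n/2) (1,...,1), for which x^† W x is the mean of
     the diagonal entries of W; fidelity 1 says this mean of unimodular
     numbers is itself unimodular, which forces all of them to be equal.
   Hence W = m I with |m| = 1, i.e. m = e^(iθ) and V = e^(iθ) U.  The theorem
   is the contrapositive of this statement (it holds for n = 0 as well). *)

Section FidelityOne.
Variable R : realType.
Local Notation C := R[i].

Lemma adjointM m (A B : 'M[C]_m) : adjoint (A *m B) = adjoint B *m adjoint A.
Proof. by rewrite /adjoint map_mxM trmx_mul. Qed.

Lemma adjointK m (A : 'M[C]_m) : adjoint (adjoint A) = A.
Proof. by apply/matrixP => i j; rewrite !mxE conjCK. Qed.

Lemma unitary_mulmx_adjoint m (U : 'M[C]_m) : unitary U -> U *m adjoint U = 1%:M.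
Proof. exact: mulmx1C. Qed.

Lemma unitary_relative m (U V : 'M[C]_m) :
  unitary U -> unitary V -> unitary (adjoint U *m V).
Proof.
move=> hU hV; rewrite /unitary adjointM adjointK mulmxA -(mulmxA _ U).
by rewrite unitary_mulmx_adjoint // mulmx1 hV.
Qed.

Lemma inner_mx m (psi phi : 'cV[C]_m) :
  inner psi phi = ((map_mx Num.conj psi)^T *m phi) 0 0.
Proof. by rewrite /inner !mxE; apply: eq_bigr => k _; rewrite !mxE. Qed.

Lemma inner_mulmx m (A B : 'M[C]_m) (x : 'cV[C]_m) :
  inner (A *m x) (B *m x) = ((map_mx Num.conj x)^T *m (adjoint A *m B) *m x) 0 0.
Proof. by rewrite inner_mx map_mxM trmx_mul /adjoint !mulmxA. Qed.

Lemma quad_delta m (W : 'M[C]_m) (k : 'I_m) :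
  ((map_mx Num.conj (delta_mx k 0 : 'cV[C]_m))^T *m W
     *m (delta_mx k 0 : 'cV[C]_m)) 0 0 = W k k.
Proof.
have -> : map_mx Num.conj (delta_mx k 0) = delta_mx k 0 :> 'cV[C]_m.
  by apply/matrixP => i j; rewrite !mxE conjC_nat.
by rewrite trmx_delta -rowE -colE !mxE.
Qed.

Lemma quad_const_diag m (W : 'M[C]_m) (c : C) : c \is Num.real ->
  (forall i j, i != j -> W i j = 0) ->
  ((map_mx Num.conj (const_mx c : 'cV[C]_m))^T *m W
     *m (const_mx c : 'cV[C]_m)) 0 0
  = c * c * \sum_k W k k.
Proof.
move=> creal Wdiag.
have -> : map_mx Num.conj (const_mx c) = const_mx c :> 'cV[C]_m.
  by apply/matrixP => i j; rewrite !mxE conj_Creal.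
rewrite mxE mulr_sumr; apply: eq_bigr => k _.
rewrite !mxE (bigD1 k) //= big1 ?addr0; first by rewrite !mxE; ring.
by move=> i hik; rewrite Wdiag // !mxE mulr0.
Qed.

(* If every diagonal entry of a unitary matrix is unimodular, the matrix is
   diagonal: each column has norm 1, already attained by its diagonal entry. *)
Lemma unitary_unimodular_diag m (W : 'M[C]_m) : unitary W ->
  (forall k, `|W k k| ^+ 2 = 1) -> forall i j, i != j -> W i j = 0.
Proof.
move=> hW hdiag i k hik.
have colnorm : \sum_j `|W j k| ^+ 2 = 1.
  move/matrixP/(_ k k): hW; rewrite !mxE eqxx /= => hkk; rewrite -[RHS]hkk.
  by apply: eq_bigr => j _; rewrite !mxE normCK mulrC.
move: colnorm; rewrite (bigD1 k) //= hdiag -[X in _ = X]addr0 => /addrI rest0.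
have := psumr_eq0P (fun j _ => exprn_ge0 2 (normr_ge0 (W j k))) rest0 hik.
by move/eqP; rewrite expf_eq0 /= normr_eq0 => /eqP.
Qed.

Lemma binary_digits_inj n i k : (i < 2 ^ n)%N -> (k < 2 ^ n)%N ->
  (forall j, (j < n)%N -> odd (i %/ 2 ^ j) = odd (k %/ 2 ^ j)) -> i = k.
Proof.
elim: n i k => [|n IH] i k.
  by rewrite expn0 !ltnS !leqn0 => /eqP -> /eqP ->.
move=> hi hk hdigits.
have low : odd i = odd k by have := hdigits 0%N (ltn0Sn _); rewrite expn0 !divn1.
have high : (i %/ 2 = k %/ 2)%N.
  apply: IH; rewrite ?ltn_divLR // -?expnSr //.
  by move=> j hj; rewrite -!divnMA -expnS; apply: hdigits.
by rewrite -(odd_double_half i) -(odd_double_half k) low -!divn2 high.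
Qed.

Definition basis_label n (k : nat) : 'I_n -> qstate :=
  fun j => if odd (k %/ 2 ^ j) then Q1 else Q0.
Arguments basis_label : clear implicits.

Lemma stimulus_basis n (k : 'I_(2 ^ n)) :
  stimulus (basis_label n k) = delta_mx k 0 :> 'cV[C]_(2 ^ n).
Proof.
apply/matrixP => i z; rewrite !mxE (ord1 z) eqxx andbT.
have amp01 c b : amp R (if c then Q1 else Q0) b = (b == c)%:R.
  by case: c; case: b.
have [->|hik] := eqVneq i k.
  by rewrite big1 // => j _; rewrite /basis_label amp01 eqxx.
have [j hj] : exists j : 'I_n, odd (i %/ 2 ^ j) != odd (k %/ 2 ^ j).
  apply/existsP; apply: contra_neqT hik; rewrite negb_exists => /forallP same.
  apply/val_inj/(@binary_digits_inj n) => //= j hj.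
  by apply/eqP; rewrite -[_ == _]negbK; apply: same (Ordinal hj).
by rewrite (bigD1 j) //= /basis_label amp01 (negbTE hj) mul0r.
Qed.

Definition plus_label n : 'I_n -> qstate := fun _ => Qplus.
Arguments plus_label : clear implicits.

Lemma stimulus_plus n :
  stimulus (plus_label n) = const_mx (isqrt2 R ^+ n) :> 'cV[C]_(2 ^ n).
Proof. by apply/matrixP => i z; rewrite !mxE prodr_const card_ord. Qed.

Lemma isqrt2_real : isqrt2 R \is Num.real.
Proof. by apply: ger0_real; rewrite /isqrt2 ler0c invr_ge0 sqrtr_ge0. Qed.

Lemma isqrt2_sq : isqrt2 R * isqrt2 R = 2^-1.
Proof.
rewrite /isqrt2 -rmorphM -invfM -expr2 sqr_sqrtr ?ler0n //.
by rewrite fmorphV rmorph_nat.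
Qed.

(* If the mean m of N unimodular numbers is unimodular, they all equal m:
   sum_i |a_i - m|^2 = sum_i (|a_i|^2 + |m|^2) - 2 Re(m^* sum_i a_i) = 0. *)
Lemma unimodular_mean N (a : 'I_N -> C) (m : C) :
  (forall i, a i * (a i)^* = 1) -> m * m^* = 1 ->
  \sum_i a i = N%:R * m -> forall i, a i = m.
Proof.
move=> ha hm hsum i.
have dev0 : \sum_j (a j - m) * (a j - m)^* = 0.
  have -> : \sum_j (a j - m) * (a j - m)^* =
      \sum_j (a j * (a j)^* + m * m^*) - (\sum_j a j) * m^* - m * (\sum_j a j)^*.
    rewrite mulr_suml rmorph_sum mulr_sumr -!sumrB; apply: eq_bigr => j _.
    by rewrite rmorphB /=; ring.
  rewrite hsum rmorphM /= conjC_nat.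
  rewrite (eq_bigr (fun _ => 2)); last by move=> j _; rewrite ha hm.
  rewrite sumr_const card_ord -mulr_natr.
  have -> : N%:R * m * m^* = N%:R * (m * m^*) by ring.
  have -> : m * (N%:R * m^*) = N%:R * (m * m^*) by ring.
  by rewrite hm mulr1; ring.
have : (a i - m) * (a i - m)^* = 0.
  by apply: (psumr_eq0P _ dev0) => // j _; rewrite -normCK exprn_ge0.
by move/eqP; rewrite mulf_eq0 conjC_eq0 orbb subr_eq0 => /eqP.
Qed.

Lemma unimodular_expi (m : C) : m * m^* = 1 -> exists t : R, m = expi t.
Proof.
move=> hm.
have := add_Re2_Im2 m; rewrite normCK hm -[1 : C]/((1 : R)%:C) => /complexI.
case: m {hm} => a b /= hab.
have a_in : a \in `[-1, 1] by rewrite in_itv /=; apply/andP; split; nra.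
have sin_abs : Num.sqrt (1 - a ^+ 2) = `|b|.
  by rewrite -hab addrC addKr sqrtr_sqr.
have [b_ge0|b_lt0] := lerP 0 b.
  by exists (acos a); rewrite /expi acosK // sin_acos // sin_abs ger0_norm.
exists (- acos a); rewrite /expi cosN sinN acosK // sin_acos // sin_abs.
by rewrite ltr0_norm // opprK.
Qed.

Lemma fidelity_one_global_phase n (U V : 'M[C]_(2 ^ n)) :
  unitary U -> unitary V ->
  (forall l, fidelity (U *m stimulus l) (V *m stimulus l) = 1) ->
  exists theta : R, V = expi theta *: U.
Proof.
move=> hU hV hF; set W := adjoint U *m V.
have V_UW : V = U *m W by rewrite /W mulmxA unitary_mulmx_adjoint // mul1mx.
have diag_unimodular k : `|W k k| ^+ 2 = 1.
  by have := hF (basis_label n k); rewrite /fidelity inner_mulmx stimulus_basis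
    quad_delta.
have W_diag := unitary_unimodular_diag (unitary_relative hU hV) diag_unimodular.
pose t : C := isqrt2 R ^+ n * isqrt2 R ^+ n.
pose mean := t * \sum_k W k k.
have mean_unimodular : mean * mean^* = 1.
  have := hF (plus_label n); rewrite /fidelity inner_mulmx stimulus_plus.
  by rewrite quad_const_diag ?realX ?isqrt2_real // normCK.
have Nt : (2 ^ n)%:R * t = 1.
  by rewrite /t -exprMn isqrt2_sq natrX -exprMn mulfV ?expr1n // pnatr_eq0.
have diag_mean : forall k, W k k = mean.
  apply: unimodular_mean mean_unimodular _ => [k|].
    by rewrite -normCK diag_unimodular.
  by rewrite /mean mulrA Nt mul1r.
have [theta mean_expi] := unimodular_expi mean_unimodular.
exists theta; rewrite V_UW -mean_expi -mul_mx_scalar; congr (_ *m _).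
apply/matrixP => i j; rewrite [RHS]mxE.
have [->|hij] := eqVneq i j.
  by rewrite diag_mean; apply: esym (mulr1n _).
by rewrite (W_diag _ _ hij); apply: esym (mulr0n _).
Qed.

End FidelityOne.

Theorem theorem1 (R : realType) (n : nat) (hn : (1 <= n)%N)
    (U V : 'M[R[i]]_(2 ^ n)) :
  unitary U -> unitary V ->
  ~ (exists theta : R, V = expi theta *: U) ->
  exists l : 'I_n -> qstate,
    fidelity (U *m stimulus l) (V *m stimulus l) != 1.
Proof.
move=> hU hV distinct.
apply: not_all_not_ex => all_one; apply: distinct.
apply: fidelity_one_global_phase hU hV _ => l.
by apply/eqP/negPn/negP; apply: all_one.
Qed.
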